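(* Let $\mathbf{A}\in\mathbb{R}^{n\times n}$ be symmetric positive semidefinite with $\mathbf{1}^{\intercal}\mathbf{A}=\mathbf{0}^{\intercal}$ and let $\mathbf{x}\in\{-1,1\}^n$. Let $M_0=\frac14\mathbf{x}^{\intercal}\mathbf{A}\mathbf{x}$, let $S_0=\{i:\mathbf{x}_i=1\}$ and $\bar S_0$ its complement, and assume $|S_0|\le n/2$. Let $s,t\in(0,\frac12]$ be such that $|S_0|=sn$ and $tn$ is an integer. Then there exists a set of nodes $T$ with $|T|=tn$ such that the cut $(T,\bar T)$ has value at least $\frac{(1-t)^2-7(1-t)/n+12/n^2}{(1-s)^2+(1-s)/n}M_0$ if $t>s$, and value at least $\frac{t^2-t/n}{s^2-s/n}M_0$ if $t<s$. Furthermore, $T$ can be obtained from $S_0$ by repeatedly moving a single node between the two sides of the cut, where each move (from a side $P$) decreases the current cut value by at most $\frac{2}{|P|}$ times the current cut value.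
   Context: For a set $T\subseteq\{1,\dots,n\}$, the value of the cut $(T,\bar T)$ is $\frac14\mathbf{y}^{\intercal}\mathbf{A}\mathbf{y}$ where $\mathbf{y}_i=1$ for $i\in T$ and $\mathbf{y}_i=-1$ otherwise. $\mathbf{1}$ is the all-ones vector. *)

From HB Require Import structures.
From mathcomp Require Import all_boot all_order all_algebra.
From mathcomp Require Import reals.
Set Implicit Arguments. Unset Strict Implicit. Unset Printing Implicit Defensive.
Import Order.TTheory GRing.Theory Num.Theory.
Local Open Scope ring_scope.

Definition psd_mx (R : realType) (n : nat) (A : 'M[R]_n) : Prop :=
  A^T = A /\ forall v : 'cV[R]_n, 0 <= (v^T *m A *m v) 0 0.

Definition sgnvec (R : realType) (n : nat) (T : {set 'I_n}) : 'cV[R]_n :=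
  \col_i (if i \in T then 1 else -1).

Definition cutval (R : realType) (n : nat) (A : 'M[R]_n) (T : {set 'I_n}) : R :=
  4^-1 * ((sgnvec R T)^T *m A *m sgnvec R T) 0 0.

Definition good_move (R : realType) (n : nat) (A : 'M[R]_n)
    (T1 T2 : {set 'I_n}) : Prop :=
  exists v : 'I_n,
    (v \notin T1 /\ T2 = v |: T1 /\
       cutval A T1 - cutval A T2 <= 2 / (#|~: T1|%:R) * cutval A T1)
 \/ (v \in T1 /\ T2 = T1 :\ v /\
       cutval A T1 - cutval A T2 <= 2 / (#|T1|%:R) * cutval A T1).

Definition reachable_by_moves (R : realType) (n : nat) (A : 'M[R]_n)
    (S T : {set 'I_n}) : Prop :=
  exists (k : nat) (f : nat -> {set 'I_n}),
    f 0%N = S /\ f k = T /\ forall j, (j < k)%N -> good_move A (f j) (f j.+1).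

From HB Require Import structures.
From mathcomp Require Import all_boot all_order all_algebra.
From mathcomp Require Import reals.
From mathcomp Require Import ring lra zify.
Set Implicit Arguments. Unset Strict Implicit. Unset Printing Implicit Defensive.
Import Order.TTheory GRing.Theory Num.Theory.
Local Open Scope ring_scope.

(* When 1^T A = 0, the cut value of T is the sum q(T) of the entries of the
   principal submatrix A_T.  The losses q(P) - q(P \ v) over v in P add up to
   2 q(P) minus the (nonnegative) diagonal of A_P, so some node of P can be
   moved out at a loss of at most 2 q(P) / |P|.  Along such moves the ratio
   q(T) / (|T| (|T| - 1)) never decreases, which gives the factor
   k (k - 1) / (a (a - 1)) = (t^2 - t/n) / (s^2 - s/n) when shrinking S0 to
   k = t n nodes.  Cut values are invariant under complementation, so growing
   S0 is shrinking its complement, and the resulting factor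
   (n - k) (n - k - 1) / ((n - a) (n - a - 1)) dominates the stated one. *)

Definition block_sum (R : zmodType) (n : nat) (A : 'M[R]_n) (P : {set 'I_n}) : R :=
  \sum_(i in P) \sum_(j in P) A i j.

Section BlockSum.
Variables (R : comPzRingType) (n : nat) (A : 'M[R]_n).
Hypothesis symA : A^T = A.

Lemma block_sum_setD1 (P : {set 'I_n}) v : v \in P ->
  block_sum A P - block_sum A (P :\ v) = 2 * \sum_(j in P) A v j - A v v.
Proof.
move=> Pv; have Asym i j : A i j = A j i by rewrite -{1}symA mxE.
have rowD1 i : \sum_(j in P) A i j = A i v + \sum_(j in P :\ v) A i j.
  by rewrite (big_setD1 v Pv).
rewrite /block_sum (big_setD1 v Pv) /= (eq_bigr _ (fun i _ => rowD1 i)) big_split /=.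
rewrite rowD1 (eq_bigr (fun i => A v i)) => [|i _]; last exact: Asym.
ring.
Qed.

Lemma sum_block_sum_setD1 (P : {set 'I_n}) :
  \sum_(v in P) (block_sum A P - block_sum A (P :\ v))
    = 2 * block_sum A P - \sum_(v in P) A v v.
Proof.
by rewrite (eq_bigr _ (fun v => block_sum_setD1 (P:=P) (v:=v))) sumrB -mulr_sumr.
Qed.

End BlockSum.

Lemma exists_le_mean (R : realDomainType) (I : finType) (P : {set I}) (F : I -> R) c :
  (0 < #|P|)%N -> \sum_(i in P) F i <= #|P|%:R * c -> exists2 i, i \in P & F i <= c.
Proof.
move=> P_gt0 sumF; case: (boolP [exists i in P, F i <= c]) => [/exists_inP|] //.
rewrite negb_exists_in => /forall_inP F_gt.
suff : #|P|%:R * c < \sum_(i in P) F i by rewrite ltNge sumF.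
rewrite mulr_natl -sumr_const; apply: ltr_sum => [|i Pi].
  by case/card_gt0P: P_gt0 => i Pi; apply/hasP; exists i.
by rewrite ltNge F_gt.
Qed.

Lemma falling_ratio_step (R : realFieldType) (b q q' c : R) :
  1 <= b -> 0 <= q' -> 0 <= c -> q - q' <= 2 / b * q ->
  b * (b - 1) * c <= q -> (b - 1) * (b - 1 - 1) * c <= q'.
Proof.
move=> b_ge1 q'_ge0 c_ge0 drop bound; have b_gt0 : 0 < b by lra.
have {}drop : b * q - b * q' <= 2 * q.
  by move: drop; rewrite -(ler_pM2l b_gt0) mulrA mulrCA divff ?gt_eqF // mulr1 mulrBr.
case: (lerP 2 b) => [b_ge2 | b_lt2].
  rewrite -(ler_pM2l b_gt0); have : 0 <= c * (b - 2) by rewrite mulr_ge0 ?subr_ge0.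
  nra.
have : (b - 1) * (b - 1 - 1) <= 0 by rewrite mulr_ge0_le0 //; lra.
by move/(ler_wpM2r c_ge0); rewrite mul0r => /le_trans; apply.
Qed.

Lemma shrink_ratioE (R : realFieldType) (N s t : R) :
  N != 0 -> s * N * (s * N - 1) != 0 ->
  (t ^+ 2 - t / N) / (s ^+ 2 - s / N) = t * N * (t * N - 1) / (s * N * (s * N - 1)).
Proof.
move=> N0 sN0; have scale x : x ^+ 2 - x / N = x * N * (x * N - 1) / N ^+ 2 by field.
rewrite !scale; field.
by move: sN0; rewrite !mulf_eq0 !negb_or => /andP[/andP[-> ->] ->].
Qed.

Lemma grow_ratio_le (R : realFieldType) (N u w : R) :
  0 < N -> 2 <= u * N -> 1 < w * N ->
  (u ^+ 2 - 7 * u / N + 12 / N ^+ 2) / (w ^+ 2 + w / N)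
    <= u * N * (u * N - 1) / (w * N * (w * N - 1)).
Proof.
move=> N_gt0 X_ge2 Y_gt1; have w_gt0 : 0 < w.
  by rewrite -(pmulr_lgt0 _ N_gt0); lra.
have -> : (u ^+ 2 - 7 * u / N + 12 / N ^+ 2) / (w ^+ 2 + w / N)
    = ((u * N) ^+ 2 - 7 * (u * N) + 12) / ((w * N) ^+ 2 + w * N).
  by field; rewrite ?gt_eqF ?addr_gt0 ?divr_gt0 ?exprn_gt0 ?mulr_gt0.
move: X_ge2 Y_gt1; set X := u * N; set Y := w * N => X_ge2 Y_gt1.
have Y2_gt0 : 0 < Y ^+ 2 + Y by rewrite addr_gt0 ?exprn_gt0 //; lra.
have YY_gt0 : 0 < Y * (Y - 1) by rewrite mulr_gt0 //; lra.
rewrite ler_pdivrMr // mulrAC ler_pdivlMr //.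
(* X(X-1)(Y^2+Y) - (X^2-7X+12)Y(Y-1) = 2Y X(X-1) + 6(X-2) Y(Y-1) *)
have : 0 <= X * (X - 1) by rewrite mulr_ge0 //; lra.
have : 0 <= (X - 2) * (Y * (Y - 1)) by rewrite mulr_ge0 //; lra.
nra.
Qed.

Section Cuts.
Variables (R : realType) (n : nat) (A : 'M[R]_n).

Lemma sgnvec_of_pm1 (x : 'cV[R]_n) :
  (forall i, x i 0 = 1 \/ x i 0 = -1) -> x = sgnvec R [set i | x i 0 == 1].
Proof.
move=> x_pm1; apply/matrixP => i j; rewrite (ord1 j) !mxE inE.
by case: (x_pm1 i) => ->; rewrite ?eqxx // (_ : -1 == 1 = false) //; apply/eqP; lra.
Qed.

Lemma cutvalC (T : {set 'I_n}) : cutval A (~: T) = cutval A T.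
Proof.
rewrite /cutval; have -> : sgnvec R (~: T) = - sgnvec R T.
  by apply/matrixP => i j; rewrite !mxE in_setC; case: (i \in T); rewrite ?opprK.
by rewrite !linearN /= !mulNmx opprK.
Qed.

Lemma good_moveC (T1 T2 : {set 'I_n}) : good_move A (~: T1) (~: T2) -> good_move A T1 T2.
Proof.
move=> [v [[vNT1 [eqT2 drop]] | [vT1 [eqT2 drop]]]]; exists v.
  rewrite !cutvalC setCK in drop; right; split; first by rewrite in_setC negbK in vNT1.
  by split=> //; apply: setC_inj; rewrite eqT2 setCD setUC.
rewrite !cutvalC in drop; left; split; first by rewrite -in_setC.
by split=> //; apply: setC_inj; rewrite eqT2 setCU setDE setIC.
Qed.

Lemma reachable_by_moves_refl (S : {set 'I_n}) : reachable_by_moves A S S.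
Proof. by exists 0%N, (fun _ => S). Qed.

Lemma reachable_by_moves_rcons (S T T' : {set 'I_n}) :
  reachable_by_moves A S T -> good_move A T T' -> reachable_by_moves A S T'.
Proof.
move=> [k [f [f0 [fk moves]]]] TT'.
exists k.+1, (fun j => if j == k.+1 then T' else f j); split; first by [].
split; first by rewrite eqxx.
move=> j; rewrite ltnS leq_eqVlt => /orP[/eqP-> | jk].
  by rewrite eqxx ltn_eqF ?fk.
have jk' : (j < k.+1)%N by apply: ltnW.
by rewrite (ltn_eqF jk') (ltn_eqF (jk : j.+1 < k.+1)%N); apply: moves.
Qed.

Lemma reachable_by_movesC (S T : {set 'I_n}) :
  reachable_by_moves A (~: S) (~: T) -> reachable_by_moves A S T.
Proof.
move=> [k [f [f0 [fk moves]]]]; exists k, (fun j => ~: f j).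
rewrite f0 fk !setCK; do 2 split=> //; move=> j jk.
by apply: good_moveC; rewrite !setCK; apply: moves.
Qed.

Hypothesis psdA : psd_mx A.

Lemma cutval_ge0 (T : {set 'I_n}) : 0 <= cutval A T.
Proof. by rewrite /cutval mulr_ge0 ?invr_ge0 ?ler0n //; case: psdA. Qed.

Hypothesis A1 : const_mx 1 *m A = 0 :> 'rV[R]_n.

Lemma cutval_block_sum (T : {set 'I_n}) : cutval A T = block_sum A T.
Proof.
have [symA _] := psdA.
have A1' : A *m const_mx 1 = 0 :> 'cV[R]_n.
  by rewrite -{1}symA -[const_mx 1]trmx_const -trmx_mul A1 trmx0.
pose u : 'cV[R]_n := \col_i (i \in T)%:R.
rewrite /cutval; have -> : sgnvec R T = 2 *: u - const_mx 1.
  by apply/matrixP => i j; rewrite !mxE; case: (i \in T) => /=; ring.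
have yA : (2 *: u - const_mx 1)^T *m A = 2 *: (u^T *m A).
  by rewrite linearB linearZ /= trmx_const mulmxBl A1 subr0 scalemxAl.
rewrite yA -!scalemxAl mulmxBr -[_ *m const_mx 1]mulmxA A1' mulmx0 subr0 -scalemxAr !mxE.
have -> (S : R) : 4^-1 * (2 * (2 * S)) = S by field.
rewrite /block_sum exchange_big [RHS]big_mkcond /=; apply: eq_bigr => j _.
rewrite !mxE; case: (j \in T); last by rewrite mulr0.
rewrite mulr1 [RHS]big_mkcond; apply: eq_bigr => i _.
by rewrite !mxE; case: (i \in T); rewrite ?mul1r ?mul0r.
Qed.

Lemma exists_cheap_removal (P : {set 'I_n}) : (0 < #|P|)%N ->
  exists2 v, v \in P & cutval A P - cutval A (P :\ v) <= 2 / #|P|%:R * cutval A P.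
Proof.
move=> P_gt0; have [symA _] := psdA.
have diag_ge0 : 0 <= \sum_(v in P) A v v.
  apply: sumr_ge0 => v _; have := cutval_ge0 [set v].
  by rewrite cutval_block_sum /block_sum !big_set1.
apply: exists_le_mean => //; under eq_bigr => v _ do rewrite !cutval_block_sum.
rewrite sum_block_sum_setD1 // cutval_block_sum mulrA mulrCA divff ?pnatr_eq0 -?lt0n //.
lra.
Qed.

Lemma shrink_by_moves (S : {set 'I_n}) k : (k <= #|S|)%N ->
  exists T, [/\ reachable_by_moves A S T, #|T| = k &
    k%:R * (k%:R - 1) / (#|S|%:R * (#|S|%:R - 1)) * cutval A S <= cutval A T].
Proof.
set D := #|S|%:R * _; set c := cutval A S / D.
have D_ge0 : 0 <= D.
  by rewrite /D; case: #|S| => [|j]; rewrite ?mul0r // -natr1 addrK mulr_ge0 ?addr_ge0.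
have c_ge0 : 0 <= c by rewrite divr_ge0 ?cutval_ge0.
suff shrink m : (m <= #|S|)%N -> exists T, [/\ reachable_by_moves A S T,
    #|T| = (#|S| - m)%N & #|T|%:R * (#|T|%:R - 1) * c <= cutval A T].
  move=> kS; have [T [ST Tk bound]] := shrink _ (leq_subr k #|S|).
  rewrite subKn // in Tk; exists T; split=> //.
  by rewrite mulrAC -mulrA -Tk.
elim: m => [_ | m IH mS].
  exists S; split; [exact: reachable_by_moves_refl | by rewrite subn0 |].
  rewrite -/D mulrCA; have [->|D_neq0] := eqVneq D 0; first by rewrite mul0r mulr0 cutval_ge0.
  by rewrite divff // mulr1.
have [T [ST Tm bound]] := IH (ltnW mS).
have T_gt0 : (0 < #|T|)%N by rewrite Tm subn_gt0.
have [v Tv drop] := exists_cheap_removal T_gt0.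
have Tv_card : #|T| = #|T :\ v|.+1 by rewrite (cardsD1 v T) Tv.
exists (T :\ v); split.
- by apply: reachable_by_moves_rcons ST _; exists v; right.
- by rewrite subnS -Tm Tv_card.
- have -> : #|T :\ v|%:R = #|T|%:R - 1 :> R by rewrite Tv_card -natr1 addrK.
  by apply: (falling_ratio_step (q := cutval A T)); rewrite ?ler1n ?cutval_ge0.
Qed.

Lemma grow_by_moves (S : {set 'I_n}) k : (#|S| <= k <= n)%N ->
  exists T, [/\ reachable_by_moves A S T, #|T| = k &
    (n - k)%:R * ((n - k)%:R - 1) / ((n - #|S|)%:R * ((n - #|S|)%:R - 1)) * cutval A S
      <= cutval A T].
Proof.
case/andP=> Sk kn; have SC_card : #|~: S| = (n - #|S|)%N.
  by have := cardsC S; rewrite card_ord; lia.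
have nk_le : (n - k <= #|~: S|)%N by rewrite SC_card leq_sub2l.
have [T' [ST' T'_card bound]] := shrink_by_moves nk_le.
exists (~: T'); split.
- by apply: reachable_by_movesC; rewrite setCK.
- by have := cardsC T'; rewrite card_ord T'_card; lia.
- by rewrite cutvalC -SC_card -(cutvalC S).
Qed.

Lemma shrink_to_fraction (S : {set 'I_n}) k (s t : R) : (0 < k < #|S|)%N ->
  #|S|%:R = s * n%:R -> t * n%:R = k%:R ->
  exists T, [/\ reachable_by_moves A S T, #|T| = k &
    (t ^+ 2 - t / n%:R) / (s ^+ 2 - s / n%:R) * cutval A S <= cutval A T].
Proof.
case/andP=> k_gt0 kS S_card tk; have Sn := max_card S; rewrite card_ord in Sn.
have N_gt0 : 0 < n%:R :> R by rewrite ltr0n; lia.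
have S_gt0 : 0 < #|S|%:R :> R by rewrite ltr0n; lia.
have S_gt1 : 1 < #|S|%:R :> R by rewrite ltr1n; lia.
rewrite shrink_ratioE -?S_card ?tk ?gt_eqF ?mulr_gt0 ?subr_gt0 //.
exact: shrink_by_moves (ltnW kS).
Qed.

Lemma grow_to_fraction (S : {set 'I_n}) k (s t : R) : (0 < #|S| < k)%N -> (k * 2 <= n)%N ->
  #|S|%:R = s * n%:R -> t * n%:R = k%:R ->
  exists T, [/\ reachable_by_moves A S T, #|T| = k &
    ((1 - t) ^+ 2 - 7 * (1 - t) / n%:R + 12 / n%:R ^+ 2)
      / ((1 - s) ^+ 2 + (1 - s) / n%:R) * cutval A S <= cutval A T].
Proof.
case/andP=> S_gt0 Sk k_half S_card tk.
have [|T [ST Tk bound]] := @grow_by_moves S k; first by rewrite (ltnW Sk); lia.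
exists T; split=> //; apply: le_trans bound.
have uN : (1 - t) * n%:R = (n - k)%:R by rewrite mulrBl mul1r tk natrB //; lia.
have wN : (1 - s) * n%:R = (n - #|S|)%:R by rewrite mulrBl mul1r -S_card natrB //; lia.
rewrite ler_wpM2r ?cutval_ge0 // -uN -wN grow_ratio_le // ?uN ?wN.
- by rewrite ltr0n; lia.
- by rewrite ler_nat; lia.
- by rewrite ltr1n; lia.
Qed.

End Cuts.

Theorem lemma3p7 (R : realType) (n : nat) (A : 'M[R]_n) (x : 'cV[R]_n)
    (s t : R) :
  psd_mx A ->
  const_mx 1 *m A = 0 :> 'rV[R]_n ->
  (forall i, x i 0 = 1 \/ x i 0 = -1) ->
  let M0 := 4^-1 * (x^T *m A *m x) 0 0 in
  let S0 := [set i | x i 0 == 1] in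
  (#|S0|%:R <= n%:R / 2 :> R) ->
  0 < s -> s <= 2^-1 -> 0 < t -> t <= 2^-1 ->
  #|S0|%:R = s * n%:R ->
  (exists k : nat, t * n%:R = k%:R) ->
  exists T : {set 'I_n},
    #|T|%:R = t * n%:R /\
    (s < t -> cutval A T >=
       ((1 - t) ^+ 2 - 7 * (1 - t) / n%:R + 12 / n%:R ^+ 2)
       / ((1 - s) ^+ 2 + (1 - s) / n%:R) * M0) /\
    (t < s -> cutval A T >=
       (t ^+ 2 - t / n%:R) / (s ^+ 2 - s / n%:R) * M0) /\
    reachable_by_moves A S0 T.
Proof.
move=> psdA A1 x_pm1 M0 S0 _ s_gt0 _ t_gt0 t_le S0_card [k tk].
have M0E : M0 = cutval A S0 by rewrite /M0 (sgnvec_of_pm1 x_pm1).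
have [n0 | n_gt0] := posnP n.
  subst n; have cut0 T : cutval A T = 0 by rewrite /cutval mxE big_ord0 mulr0.
  exists S0; rewrite M0E !cut0 !mulr0; split; first by rewrite S0_card mulr0.
  by do 2 split=> //; exact: reachable_by_moves_refl.
have N_gt0 : 0 < n%:R :> R by rewrite ltr0n.
have S0_gt0 : (0 < #|S0|)%N by rewrite -(ltr0n R) S0_card mulr_gt0.
have k_gt0 : (0 < k)%N by rewrite -(ltr0n R) -tk mulr_gt0.
have k_half : (k * 2 <= n)%N.
  by rewrite -(ler_nat R) natrM -tk; have := ler_wpM2r (ltW N_gt0) t_le; lra.
rewrite M0E; case: (ltgtP s t) => [s_lt_t | t_lt_s | <-].
- have S0k : (#|S0| < k)%N by rewrite -(ltr_nat R) -tk S0_card ltr_pM2r.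
  have [|T [S0T Tk bound]] := grow_to_fraction psdA A1 _ k_half S0_card tk.
    by rewrite S0_gt0.
  by exists T; rewrite Tk tk.
- have kS0 : (k < #|S0|)%N by rewrite -(ltr_nat R) -tk S0_card ltr_pM2r.
  have [|T [S0T Tk bound]] := shrink_to_fraction psdA A1 _ S0_card tk.
    by rewrite k_gt0.
  by exists T; rewrite Tk tk.
- by exists S0; do 3 split=> //; exact: reachable_by_moves_refl.
Qed.
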